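(* Let $A$ be a $B$-algebra with a $B$-linear double bracket, $B=\bigoplus_{s\in I}\Bbbk e_s$, and let $e_1,e_2$ be two distinct idempotents of the family. Let $A_1=A^f_{e_2\to e_1}$ and $A_2=A^f_{e_1\to e_2}$ with their induced double brackets, and let $\pi_k:A\to A_k$ ($k=1,2$) be the maps $a\mapsto a^f$. Then there exists an isomorphism of algebras $\phi:A_1\to A_2$ with $\phi\circ\pi_1=\pi_2$ which is an isomorphism of double brackets, i.e. $\{\!\{\phi(a),\phi(b)\}\!\}_{A_2}=(\phi\otimes\phi)\{\!\{a,b\}\!\}_{A_1}$ for all $a,b\in A_1$.
   Context: $\Bbbk$ field of characteristic $0$; algebras associative, unital, finitely generated; $B=\bigoplus_{s\in I}\Bbbk e_s$ with orthogonal idempotents summing to $1$. Sweedler notation $d=d'\otimes d''$, $(d'\otimes d'')^\circ=d''\otimes d'$, outer bimodule $a(d'\otimes d'')b=ad'\otimes d''b$. A $B$-linear double bracket: bilinear $\{\!\{-,-\}\!\}:A\times A\to A\otimes A$ with $\{\!\{a,b\}\!\}=-\{\!\{b,a\}\!\}^\circ$, $\{\!\{a,bc\}\!\}=\{\!\{a,b\}\!\}c+b\{\!\{a,c\}\!\}$, zero if an argument lies in $B$. Fusion of $e_j$ onto $e_i$ ($i\ne j$): $\hat e=1-e_i-e_j$, $\bar A=A*_{\Bbbk e_i\oplus\Bbbk e_j\oplus\Bbbk\hat e}(\mathrm{Mat}_2(\Bbbk)\oplus\Bbbk\hat e)$ where $\mathrm{Mat}_2(\Bbbk)$ has matrix units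 $e_{ii}=e_i,e_{ij},e_{ji},e_{jj}=e_j$; $A^f_{e_j\to e_i}=\epsilon\bar A\epsilon$ with $\epsilon=1-e_j$, an algebra over $\bigoplus_{s\ne j}\Bbbk e_s$; $a^f=\epsilon a\epsilon+e_{ij}ae_{ji}+e_{ij}a\epsilon+\epsilon ae_{ji}$. $A^f$ is generated by elements $e_aaf_a$ with $a\in A$, $e_a\in\{\epsilon,e_{ij}\}$, $f_a\in\{\epsilon,e_{ji}\}$ of the forms $t$ ($t\in\epsilon A\epsilon$), $e_{ij}u$ ($u\in e_jA\epsilon$), $ve_{ji}$ ($v\in\epsilon Ae_j$), $e_{ij}we_{ji}$ ($w\in e_jAe_j$); the induced double bracket on $A^f$ is determined by $\{\!\{e_aaf_a,e_bbf_b\}\!\}=e_b\{\!\{a,b\}\!\}'f_a\otimes e_a\{\!\{a,b\}\!\}''f_b$. *)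

From HB Require Import structures.
From mathcomp Require Import all_boot all_order all_algebra.
Set Implicit Arguments. Unset Strict Implicit. Unset Printing Implicit Defensive.
Import GRing.Theory.
Local Open Scope ring_scope.

Section Tensors.
Variables (k : fieldType) (T : algType k).

(* An element of T (x)_k T is represented by a finite list of pure tensors
   sum_p p.1 (x) p.2.  Two such lists represent the same element of T (x) T
   iff every bilinear form T x T -> k takes the same value on them
   (linear functionals on T (x) T = bilinear forms, and over a field the
   algebraic dual separates points). *)
Definition tensor := seq (T * T).

Definition bilinear_form (f : T -> T -> k) : Prop :=
  (forall c x y z, f (c *: x + y) z = c * f x z + f y z) /\
  (forall c x y z, f z (c *: x + y) = c * f z x + f z y).

Definition tsum (f : T -> T -> k) (u : tensor) : k := \sum_(p <- u) f p.1 p.2.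

Definition teq (u v : tensor) : Prop :=
  forall f, bilinear_form f -> tsum f u = tsum f v.

Definition tscale (c : k) (u : tensor) : tensor := [seq (c *: p.1, p.2) | p <- u].
Definition topp (u : tensor) : tensor := [seq (- p.1, p.2) | p <- u].
Definition tswap (u : tensor) : tensor := [seq (p.2, p.1) | p <- u].
(* outer bimodule structure: a (d' (x) d'') b = a d' (x) d'' b *)
Definition tmull (a : T) (u : tensor) : tensor := [seq (a * p.1, p.2) | p <- u].
Definition tmulr (u : tensor) (b : T) : tensor := [seq (p.1, p.2 * b) | p <- u].

(* br is a double bracket on the subspace/subalgebra Dom of T (closed under the
   operations), which vanishes when an argument lies in the base inB. *)
Definition is_double_bracket (Dom inB : T -> Prop) (br : T -> T -> tensor) : Prop :=
  [/\ (forall c a a' b, Dom a -> Dom a' -> Dom b ->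
         teq (br (c *: a + a') b) (tscale c (br a b) ++ br a' b)),
      (forall c a b b', Dom a -> Dom b -> Dom b' ->
         teq (br a (c *: b + b')) (tscale c (br a b) ++ br a b')),
      (forall a b, Dom a -> Dom b -> teq (br a b) (topp (tswap (br b a)))),
      (forall a b c, Dom a -> Dom b -> Dom c ->
         teq (br a (b * c)) (tmulr (br a b) c ++ tmull b (br a c))) &
      (forall a b, Dom a -> Dom b -> inB a \/ inB b -> teq (br a b) [::])].

End Tensors.

Section Alg.
Variable k : fieldType.

Definition is_alg_hom (A D : algType k) (f : A -> D) : Prop :=
  [/\ forall c x y, f (c *: x + y) = c *: f x + f y,
      forall x y, f (x * y) = f x * f y & f 1 = 1].

Definition fin_gen (A : algType k) : Prop :=
  exists s : seq A, forall a : A, exists ws : seq (k * seq nat),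
    a = \sum_(w <- ws) w.1 *: \prod_(n <- w.2) s`_n.

(* e : I -> A is a family of nonzero orthogonal idempotents summing to 1,
   so B = (+)_s k e_s is a subalgebra of A. *)
Definition base_family (A : algType k) (I : finType) (e : I -> A) : Prop :=
  [/\ forall s t, e s * e t = (if s == t then e s else 0),
      \sum_s e s = 1 & forall s, e s != 0].

Definition inBase (A : algType k) (I : finType) (e : I -> A) (P : pred I) (x : A) : Prop :=
  exists c : I -> k, x = \sum_(s | P s) c s *: e s.

(* Relations satisfied by the images of the matrix units e_ij, e_ji under an
   algebra map from Mat_2(k) (+) k e^ agreeing with g on k e_i (+) k e_j (+) k e^
   (the remaining matrix-unit relations follow from these). *)
Definition mat_rel (A D : algType k) (I : finType) (e : I -> A) (i j : I)
  (g : A -> D) (y z : D) : Prop :=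
  [/\ y * z = g (e i), z * y = g (e j),
      g (e i) * y = y /\ y * g (e j) = y &
      g (e j) * z = z /\ z * g (e i) = z].

(* (Abar, iota, xij, xji) is the amalgamated free product
   A *_{k e_i (+) k e_j (+) k e^} (Mat_2(k) (+) k e^), given by its universal
   property; xij, xji are the images of the matrix units e_ij, e_ji. *)
Definition is_fusion_free_product (A : algType k) (I : finType) (e : I -> A) (i j : I)
  (Abar : algType k) (iota : A -> Abar) (xij xji : Abar) : Prop :=
  [/\ is_alg_hom iota, mat_rel e i j iota xij xji &
      forall (D : algType k) (g : A -> D) (y z : D),
        is_alg_hom g -> mat_rel e i j g y z ->
        exists h : Abar -> D,
          [/\ is_alg_hom h, (forall a, h (iota a) = g a), h xij = y, h xji = z &
              forall h' : Abar -> D, is_alg_hom h' -> (forall a, h' (iota a) = g a) ->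
                h' xij = y -> h' xji = z -> forall x, h' x = h x]].

Definition feps (A Abar : algType k) (I : finType) (e : I -> A) (j : I) (iota : A -> Abar) : Abar :=
  1 - iota (e j).

(* membership in the corner algebra A^f = epsilon Abar epsilon *)
Definition in_corner (Abar : algType k) (eps : Abar) (x : Abar) : Prop := eps * x * eps = x.

Definition fmap (A Abar : algType k) (iota : A -> Abar) (xij xji eps : Abar) (a : A) : Abar :=
  eps * iota a * eps + xij * iota a * xji + xij * iota a * eps + eps * iota a * xji.

(* (ea, fa, a) describes a generator ea a fa of A^f of one of the four forms *)
Definition gen_form (A Abar : algType k) (I : finType) (e : I -> A) (j : I)
  (xij xji eps : Abar) (ea fa : Abar) (a : A) : Prop :=
  [\/ [/\ ea = eps, fa = eps & (1 - e j) * a * (1 - e j) = a],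
      [/\ ea = xij, fa = eps & e j * a * (1 - e j) = a],
      [/\ ea = eps, fa = xji & (1 - e j) * a * e j = a] |
      [/\ ea = xij, fa = xji & e j * a * e j = a]].

(* brf is the induced double bracket on A^f: it is a double bracket on the
   corner algebra over the base (+)_{s != j} k e_s, and satisfies the
   defining formula on generators. *)
Definition induced_bracket (A Abar : algType k) (I : finType) (e : I -> A) (j : I)
  (br : A -> A -> tensor A) (iota : A -> Abar) (xij xji : Abar)
  (brf : Abar -> Abar -> tensor Abar) : Prop :=
  let eps := feps e j iota in
  is_double_bracket (in_corner eps) (inBase (iota \o e) (fun s => s != j)) brf /\
  forall ea fa eb fb a b,
    gen_form e j xij xji eps ea fa a -> gen_form e j xij xji eps eb fb b ->
    teq (brf (ea * iota a * fa) (eb * iota b * fb))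
        [seq (eb * iota p.1 * fa, ea * iota p.2 * fb) | p <- br a b].

End Alg.

From HB Require Import structures.
From mathcomp Require Import all_boot all_order all_algebra.
From Stdlib Require Import ClassicalEpsilon.
Import GRing.Theory.
Local Open Scope ring_scope.
Set Implicit Arguments. Unset Strict Implicit. Unset Printing Implicit Defensive.

(* Let Abar1 (resp. Abar2) be the free product of A with Mat_2(k) amalgamated
   over k e_1 (+) k e_2 (+) k e^, for the fusion of e_2 onto e_1 (resp. of e_1
   onto e_2), and A_1 = eps1 Abar1 eps1, A_2 = eps2 Abar2 eps2.
   - Both free products satisfy the same universal property up to exchanging
     the matrix units e_12, e_21, so there are inverse algebra isomorphisms
     F : Abar1 -> Abar2, G, fixing A and exchanging e_12, e_21 (fusion_swap).
   - F maps eps1 = 1 - e_2 to 1 - e_2, so we conjugate by the involution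
     P = e^ + e_12 + e_21 of Abar2, which exchanges e_1 and e_2:
     phi = P F(-) P is an algebra isomorphism A_1 -> A_2 with phi o pi_1 = pi_2.
   - phi maps a generator l a r of A_1 (l in {eps1, e_12}, r in {eps1, e_21})
     to l' a r' with l', r' in the B-spans of the corresponding factors of A_2.
     The defining formula of the induced bracket extends B-bilinearly to such
     elements (gen_formula_span), by B-bilinearity of the bracket on A.
   - The corners are generated by their generators (corner_generated, from the
     universal property), and both induced brackets are skew biderivations, so
     intertwining on generators gives intertwining everywhere
     (intertwines_closure). *)

Inductive nclosure (k : fieldType) (T : algType k) (S : T -> Prop) : T -> Prop :=
| ncl_base x : S x -> nclosure S x
| ncl_lin c x y : nclosure S x -> nclosure S y -> nclosure S (c *: x + y)
| ncl_mul x y : nclosure S x -> nclosure S y -> nclosure S (x * y).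

Section GeneratedSubalgebra.
Variables (k : fieldType) (T : algType k) (S : T -> Prop).

Definition subalg_closure : T -> Prop := nclosure (fun x => S x \/ x = 1).

Lemma subalg_closure1 : subalg_closure 1.
Proof. by apply: ncl_base; right. Qed.

Lemma subalg_closure0 : subalg_closure 0.
Proof.
have -> : (0 : T) = (-1) *: 1 + 1 by rewrite scaleN1r addNr.
by apply: ncl_lin; apply: subalg_closure1.
Qed.

(* Its boolean membership predicate (decided classically), needed to equip it
   with an algebra structure. *)
Definition subalg_mem (x : T) : bool :=
  if excluded_middle_informative (subalg_closure x) then true else false.

Lemma subalg_memP x : reflect (subalg_closure x) (subalg_mem x).
Proof. by rewrite /subalg_mem; case: excluded_middle_informative => h; constructor. Qed.

Record subalg := Subalg { subalg_val : T; _ : subalg_mem subalg_val }.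
HB.instance Definition _ := [isSub for subalg_val].
HB.instance Definition _ := [Choice of subalg by <:].

Lemma subalg_mem_closed : GRing.subsemialg_closed subalg_mem.
Proof.
split; first exact/subalg_memP/subalg_closure1.
- split; first exact/subalg_memP/subalg_closure0.
  move=> x y /subalg_memP hx /subalg_memP hy; apply/subalg_memP.
  by rewrite -[x]scale1r; apply: ncl_lin.
- move=> c x /subalg_memP hx; apply/subalg_memP; rewrite -[_ *: _]addr0.
  by apply: ncl_lin => //; apply: subalg_closure0.
- by move=> x y /subalg_memP hx /subalg_memP hy; apply/subalg_memP; apply: ncl_mul.
Qed.

HB.instance Definition _ :=
  GRing.SubChoice_isSubAlgebra.Build k T subalg_mem subalg subalg_mem_closed.

Lemma subalg_val_hom : is_alg_hom subalg_val.
Proof. by []. Qed.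

Definition subalg_gen (x : T) (Sx : S x) : subalg :=
  Subalg (introT (subalg_memP x) (ncl_base (or_introl Sx))).

End GeneratedSubalgebra.

Section LinearMaps.
Variables (k : fieldType) (T T' : lmodType k).

Definition lin (f : T -> T') := forall c x y, f (c *: x + y) = c *: f x + f y.

Variable f : T -> T'.
Hypothesis hf : lin f.

Lemma lin0 : f 0 = 0.
Proof.
by have := hf 1 0 0; rewrite !scale1r addr0 => h; apply: (addrI (f 0)); rewrite addr0 -h.
Qed.
Lemma linD x y : f (x + y) = f x + f y.
Proof. by have := hf 1 x y; rewrite !scale1r. Qed.
Lemma linZ c x : f (c *: x) = c *: f x.
Proof. by have := hf c x 0; rewrite !addr0 lin0 addr0. Qed.
Lemma linN x : f (- x) = - f x.
Proof. by rewrite -scaleN1r linZ scaleN1r. Qed.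
Lemma linB x y : f (x - y) = f x - f y.
Proof. by rewrite linD linN. Qed.

End LinearMaps.

Lemma lin_id (k : fieldType) (T : lmodType k) : lin (@id T).
Proof. by []. Qed.

Lemma lin_opp (k : fieldType) (T : lmodType k) : lin (fun x : T => - x).
Proof. by move=> c x y; rewrite opprD scalerN. Qed.

Lemma lin_scale (k : fieldType) (T : lmodType k) (c : k) : lin (fun x : T => c *: x).
Proof. by move=> d x y; rewrite scalerDr !scalerA mulrC. Qed.

Lemma lin_comp (k : fieldType) (T1 T2 T3 : lmodType k) (f : T2 -> T3) (g : T1 -> T2) :
  lin f -> lin g -> lin (fun x => f (g x)).
Proof. by move=> hf hg c x y; rewrite hg hf. Qed.

Lemma lin_lr (k : fieldType) (T : algType k) (l r : T) : lin (fun x => l * x * r).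
Proof. by move=> c x y; rewrite mulrDr mulrDl -scalerAr -scalerAl. Qed.

Lemma corner_lin (k : fieldType) (T : algType k) (E : T) c x y :
  in_corner E x -> in_corner E y -> in_corner E (c *: x + y).
Proof. by rewrite /in_corner => hx hy; rewrite mulrDr mulrDl -scalerAr -scalerAl hx hy. Qed.

Lemma corner_mul (k : fieldType) (T : algType k) (E : T) x y :
  E * E = E -> in_corner E x -> in_corner E y -> in_corner E (x * y).
Proof.
move=> hE hx hy.
have El z : in_corner E z -> E * z = z by move=> <-; rewrite !mulrA hE.
have Er z : in_corner E z -> z * E = z by move=> <-; rewrite -mulrA hE.
by rewrite /in_corner mulrA (El x hx) -mulrA (Er y hy).
Qed.

Lemma mul_split (k : fieldType) (T : algType k) (l x y r u v w : T) :
  u * u + v * w = 1 -> l * (x * y) * r = (l * x * u) * (u * y * r) + (l * x * v) * (w * y * r).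
Proof. by move=> h; rewrite -{1}[x]mulr1 -h !(mulrDr, mulrDl) !mulrA. Qed.

Lemma lin_mull (k : fieldType) (T : algType k) (l : T) : lin (fun x => l * x).
Proof. by move=> c x y; rewrite mulrDr scalerAr. Qed.

Lemma lin_mulr (k : fieldType) (T : algType k) (r : T) : lin (fun x => x * r).
Proof. by move=> c x y; rewrite mulrDl scalerAl. Qed.

Lemma hom_id (k : fieldType) (T : algType k) : is_alg_hom (fun x : T => x).
Proof. by []. Qed.

Lemma hom_comp (k : fieldType) (T1 T2 T3 : algType k) (f : T1 -> T2) (g : T2 -> T3) :
  is_alg_hom f -> is_alg_hom g -> is_alg_hom (fun x => g (f x)).
Proof.
case=> f_lin f_mul f_1 [g_lin g_mul g_1]; split; last by rewrite f_1 g_1.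
- by move=> c x y; rewrite f_lin g_lin.
- by move=> x y; rewrite f_mul g_mul.
Qed.

Section TensorCalculus.
Variables (k : fieldType) (T T' : algType k).

Lemma teq_sym (u v : tensor T) : teq u v -> teq v u.
Proof. by move=> h f hf; rewrite h. Qed.

Lemma teq_trans (u v w : tensor T) : teq u v -> teq v w -> teq u w.
Proof. by move=> h1 h2 f hf; rewrite h1 // h2. Qed.

Lemma eq_teq (u v : tensor T) : u = v -> teq u v.
Proof. by move->. Qed.

Lemma teq_cat (u u' v v' : tensor T) : teq u u' -> teq v v' -> teq (u ++ v) (u' ++ v').
Proof. by move=> h1 h2 f hf; rewrite /tsum !big_cat -!/(tsum _ _) h1 // h2. Qed.

Section BilinearForm.
Variables (F : T' -> T' -> k) (hF : bilinear_form F).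

Lemma bilDl x y z : F (x + y) z = F x z + F y z.
Proof. by have := hF.1 1 x y z; rewrite scale1r mul1r. Qed.
Lemma bilDr x y z : F z (x + y) = F z x + F z y.
Proof. by have := hF.2 1 x y z; rewrite scale1r mul1r. Qed.
Lemma bilZl c x z : F (c *: x) z = c * F x z.
Proof.
have F0 : F 0 z = 0 by apply: (addrI (F 0 z)); rewrite -bilDl !addr0.
by have := hF.1 c x 0 z; rewrite addr0 F0 addr0.
Qed.
Lemma bilZr c x z : F z (c *: x) = c * F z x.
Proof.
have F0 : F z 0 = 0 by apply: (addrI (F z 0)); rewrite -bilDr !addr0.
by have := hF.2 c x 0 z; rewrite addr0 F0 addr0.
Qed.

End BilinearForm.

Lemma teq_map (f g : T -> T') (u v : tensor T) : lin f -> lin g -> teq u v ->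
  teq [seq (f p.1, g p.2) | p <- u] [seq (f p.1, g p.2) | p <- v].
Proof.
move=> hf hg h F hF; rewrite /tsum !big_map /=.
have hb : bilinear_form (fun x y => F (f x) (g y)).
  by split=> c x y z; [rewrite hf hF.1 | rewrite hg hF.2].
exact: (h _ hb).
Qed.

Lemma teq_map_swap (f g : T -> T') (u v : tensor T) : lin f -> lin g -> teq u v ->
  teq [seq (f p.2, g p.1) | p <- u] [seq (f p.2, g p.1) | p <- v].
Proof.
move=> hf hg h F hF; rewrite /tsum !big_map /=.
have hb : bilinear_form (fun y x => F (f x) (g y)).
  by split=> c x y z; [rewrite hg hF.2 | rewrite hf hF.1].
exact: (h _ hb).
Qed.

Variable U : Type.

Lemma teq_addl (h1 h2 g : U -> T') (u : seq U) :
  teq [seq (h1 p + h2 p, g p) | p <- u] ([seq (h1 p, g p) | p <- u] ++ [seq (h2 p, g p) | p <- u]).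
Proof.
move=> F hF; rewrite /tsum big_cat !big_map /= -big_split /=.
by apply: eq_bigr => p _; rewrite bilDl.
Qed.

Lemma teq_addr (h1 h2 g : U -> T') (u : seq U) :
  teq [seq (g p, h1 p + h2 p) | p <- u] ([seq (g p, h1 p) | p <- u] ++ [seq (g p, h2 p) | p <- u]).
Proof.
move=> F hF; rewrite /tsum big_cat !big_map /= -big_split /=.
by apply: eq_bigr => p _; rewrite bilDr.
Qed.

Lemma teq_scaler c (h g : U -> T') (u : seq U) :
  teq [seq (h p, c *: g p) | p <- u] (tscale c [seq (h p, g p) | p <- u]).
Proof.
move=> F hF; rewrite /tsum /tscale -map_comp !big_map.
by apply: eq_bigr => p _; rewrite (bilZr hF) (bilZl hF).
Qed.

End TensorCalculus.

Lemma teq_tscale (k : fieldType) (T : algType k) c (u v : tensor T) :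
  teq u v -> teq (tscale c u) (tscale c v).
Proof. by move=> h; have := teq_map (lin_scale c) (@lin_id _ _) h. Qed.

Lemma toppswap (k : fieldType) (T : algType k) (u : tensor T) :
  topp (tswap u) = [seq (- p.2, p.1) | p <- u].
Proof. by rewrite /topp /tswap -map_comp. Qed.

Section BaseLinearity.
Variables (k : fieldType) (A : algType k) (I : finType) (e : I -> A).
Hypothesis he : base_family e.
Local Notation B := (inBase e predT).

Lemma inBase_e s : B (e s).
Proof.
exists (fun t => (t == s)%:R); rewrite (bigD1 s) //= big1 ?addr0 ?eqxx ?scale1r //.
by move=> t /negbTE ->; rewrite scale0r.
Qed.

Lemma inBase_1 : B 1.
Proof.
case: he => _ sum_e _; exists (fun _ => 1); rewrite -sum_e.
by apply: eq_bigr => s _; rewrite scale1r.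
Qed.

Lemma inBase_0 : B 0.
Proof. by exists (fun _ => 0); rewrite big1 // => s _; rewrite scale0r. Qed.

Lemma inBase_sub x y : B x -> B y -> B (x - y).
Proof.
case=> cx -> [cy ->]; exists (fun s => cx s - cy s).
by rewrite -sumrB; apply: eq_bigr => s _; rewrite scalerBl.
Qed.

Variable br : A -> A -> tensor A.
Hypothesis hbr : is_double_bracket (fun _ => True) B br.

Lemma br_mulr_base a b c : B c -> teq (br a (b * c)) (tmulr (br a b) c).
Proof.
move=> hc; case: hbr => _ _ _ leibniz vanish.
apply: teq_trans (leibniz a b c Logic.I Logic.I Logic.I) _; rewrite -[X in teq _ X]cats0.
apply: teq_cat; first by [].
by have := teq_map (lin_mull b) (@lin_id _ _) (vanish a c Logic.I Logic.I (or_intror hc)).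
Qed.

Lemma br_mull_base a b c : B c -> teq (br a (c * b)) (tmull c (br a b)).
Proof.
move=> hc; case: hbr => _ _ _ leibniz vanish.
apply: teq_trans (leibniz a c b Logic.I Logic.I Logic.I) _; rewrite -[X in teq _ X]cat0s.
apply: teq_cat; last by [].
by have := teq_map (@lin_id _ _) (lin_mulr b) (vanish a c Logic.I Logic.I (or_intror hc)).
Qed.

Lemma br_base_right a b c d : B c -> B d ->
  teq (br a (c * b * d)) [seq (c * p.1, p.2 * d) | p <- br a b].
Proof.
move=> hc hd; apply: teq_trans (br_mulr_base _ _ hd) _.
have := teq_map (@lin_id _ _) (lin_mulr d) (br_mull_base a b hc).
by rewrite /tmulr /tmull -map_comp.
Qed.

Lemma br_base_left a b c d : B c -> B d ->
  teq (br (c * a * d) b) [seq (p.1 * d, c * p.2) | p <- br a b].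
Proof.
move=> hc hd; case: hbr => _ _ skew _ _.
apply: teq_trans (skew _ _ Logic.I Logic.I) _; rewrite toppswap.
apply: teq_trans (teq_map_swap (@lin_opp _ _) (@lin_id _ _) (br_base_right b a hc hd)) _.
apply: teq_sym; apply: teq_trans (teq_map (lin_mulr d) (lin_mull c) (skew a b Logic.I Logic.I)) _.
by rewrite toppswap -!map_comp; apply: eq_teq; apply: eq_map => p /=; rewrite mulNr.
Qed.

Lemma br_base_bimodule a b c d c' d' : B c -> B d -> B c' -> B d' ->
  teq (br (c * a * d) (c' * b * d')) [seq (c' * p.1 * d, c * p.2 * d') | p <- br a b].
Proof.
move=> hc hd hc' hd'; apply: teq_trans (br_base_left _ _ hc hd) _.
apply: teq_trans (teq_map (lin_mulr d) (lin_mull c) (br_base_right a b hc' hd')) _.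
by rewrite -map_comp; apply: eq_teq; apply: eq_map => p /=; rewrite mulrA.
Qed.

End BaseLinearity.

Section FusionAlgebra.
Variables (k : fieldType) (A : algType k) (I : finType) (e : I -> A).
Hypothesis he : base_family e.
Variables (i j : I) (Abar : algType k) (io : A -> Abar) (xij xji : Abar).
Hypothesis hij : i != j.
Hypothesis hA : is_fusion_free_product e i j io xij xji.
Local Notation B := (inBase e predT).
Local Notation eps := (feps e j io).

Lemma io_hom : is_alg_hom io. Proof. by case: hA. Qed.
Lemma io_lin : lin io. Proof. by case: io_hom. Qed.
Lemma ioM x y : io (x * y) = io x * io y. Proof. by case: io_hom. Qed.
Lemma io1 : io 1 = 1. Proof. by case: io_hom. Qed.
Lemma io0 : io 0 = 0. Proof. exact: lin0 io_lin. Qed.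

Definition ehat : A := 1 - e i - e j.

Lemma e_mul s t : e s * e t = if s == t then e s else 0. Proof. by case: he. Qed.

Lemma inBase_ehat : B ehat.
Proof. by rewrite /ehat; do 2![apply: inBase_sub => //; last exact: inBase_e]; exact: inBase_1. Qed.

Lemma e_idem s : e s * e s = e s. Proof. by rewrite e_mul eqxx. Qed.
Lemma e_ij : e i * e j = 0. Proof. by rewrite e_mul (negbTE hij). Qed.
Lemma e_ji : e j * e i = 0. Proof. by rewrite e_mul eq_sym (negbTE hij). Qed.
Lemma ehat_ei : ehat * e i = 0. Proof. by rewrite !mulrBl mul1r e_idem e_ji subrr subr0. Qed.
Lemma ehat_ej : ehat * e j = 0. Proof. by rewrite !mulrBl mul1r e_idem e_ij subr0 subrr. Qed.
Lemma ei_ehat : e i * ehat = 0. Proof. by rewrite !mulrBr mulr1 e_idem e_ij subrr subr0. Qed.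
Lemma ej_ehat : e j * ehat = 0. Proof. by rewrite !mulrBr mulr1 e_idem e_ji subr0 subrr. Qed.
Lemma ehat_idem : ehat * ehat = ehat.
Proof. by rewrite {2}/ehat !mulrBr mulr1 ehat_ei ehat_ej !subr0. Qed.

(* The relations of the matrix units e_ij, e_ji in the free product, and the
   consequences needed below.  Together with io e^, io e_i, io e_j they
   multiply like the matrix units of k (+) Mat_2(k). *)
Lemma mu_XY : xij * xji = io (e i). Proof. by case: hA => _ []. Qed.
Lemma mu_YX : xji * xij = io (e j). Proof. by case: hA => _ []. Qed.
Lemma mu_EiX : io (e i) * xij = xij. Proof. by case: hA => _ [] _ _ []. Qed.
Lemma mu_XEj : xij * io (e j) = xij. Proof. by case: hA => _ [] _ _ []. Qed.
Lemma mu_EjY : io (e j) * xji = xji. Proof. by case: hA => _ [] _ _ _ []. Qed.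
Lemma mu_YEi : xji * io (e i) = xji. Proof. by case: hA => _ [] _ _ _ []. Qed.

Lemma ioMV a b : io a * io b = io (a * b). Proof. by rewrite ioM. Qed.

Lemma mu_zero_l (x : A) : x * e i = 0 -> io x * xij = 0.
Proof. by move=> h; rewrite -mu_EiX mulrA ioMV h io0 mul0r. Qed.
Lemma mu_zero_r (x : A) : e j * x = 0 -> xij * io x = 0.
Proof. by move=> h; rewrite -mu_XEj -mulrA ioMV h io0 mulr0. Qed.
Lemma mu_zero_l' (x : A) : x * e j = 0 -> io x * xji = 0.
Proof. by move=> h; rewrite -mu_EjY mulrA ioMV h io0 mul0r. Qed.
Lemma mu_zero_r' (x : A) : e i * x = 0 -> xji * io x = 0.
Proof. by move=> h; rewrite -mu_YEi -mulrA ioMV h io0 mulr0. Qed.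

Lemma mu_XX : xij * xij = 0. Proof. by rewrite -{1}mu_XEj -mulrA (mu_zero_l e_ji) mulr0. Qed.
Lemma mu_YY : xji * xji = 0. Proof. by rewrite -{1}mu_YEi -mulrA (mu_zero_l' e_ij) mulr0. Qed.

Definition fusion_table := (ioMV, e_idem, e_ij, e_ji, ehat_ei, ehat_ej, ei_ehat, ej_ehat,
  ehat_idem, io0, mu_XY, mu_YX, mu_EiX, mu_XEj, mu_EjY, mu_YEi, mu_XX, mu_YY,
  mu_zero_l e_ji, mu_zero_l ehat_ei, mu_zero_r e_ji, mu_zero_r ej_ehat,
  mu_zero_l' e_ij, mu_zero_l' ehat_ej, mu_zero_r' e_ij, mu_zero_r' ei_ehat, mul0r, mulr0).

Lemma io_unit_split : 1 = io ehat + io (e i) + io (e j).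
Proof. by rewrite -!(linD io_lin) /ehat (addrAC (1 - e i)) !subrK io1. Qed.

Lemma eps_split : eps = io ehat + io (e i).
Proof. by rewrite /feps io_unit_split addrK. Qed.

Local Ltac fusion_norm :=
  rewrite ?eps_split ?(mulrDl, mulrDr) ?mulrA ?fusion_table ?(addr0, add0r).


(* The generators of A^f = eps Abar eps are the l (io a) r with l in
   {eps, e_ij} and r in {eps, e_ji}. *)
Definition lfactor (l : Abar) := l = eps \/ l = xij.
Definition rfactor (r : Abar) := r = eps \/ r = xji.
Definition generator (x : Abar) :=
  exists l r a, [/\ lfactor l, rfactor r & x = l * io a * r].

Definition lspan (l : Abar) := exists b g, [/\ B b, B g & l = eps * io b + xij * io g].
Definition rspan (r : Abar) := exists b g, [/\ B b, B g & r = io b * eps + io g * xji].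

Lemma eps_idem : eps * eps = eps.
Proof. by fusion_norm. Qed.

Lemma eps_unit_decomp : eps * eps + xji * xij = 1.
Proof. by fusion_norm; rewrite io_unit_split. Qed.

Definition lcorner (l : Abar) := eps * l = l.
Definition rcorner (r : Abar) := r * eps = r.

Lemma lfactor_lcorner l : lfactor l -> lcorner l.
Proof. by case=> ->; rewrite /lcorner; fusion_norm; rewrite ?(addrC xij). Qed.

Lemma rfactor_rcorner r : rfactor r -> rcorner r.
Proof. by case=> ->; rewrite /rcorner; fusion_norm. Qed.

Lemma lspan_lcorner l : lspan l -> lcorner l.
Proof.
case=> b [g [_ _ ->]]; rewrite /lcorner mulrDr !mulrA eps_idem.
by rewrite (lfactor_lcorner (or_intror erefl)).
Qed.

Lemma rspan_rcorner r : rspan r -> rcorner r.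
Proof.
case=> b [g [_ _ ->]]; rewrite /rcorner mulrDl -!mulrA eps_idem.
by rewrite (rfactor_rcorner (or_intror erefl)).
Qed.

Lemma corner_lr l r x : lcorner l -> rcorner r -> in_corner eps (l * x * r).
Proof. by move=> hl hr; rewrite /in_corner !mulrA hl -mulrA hr. Qed.

Lemma hom_mat_rel (D : algType k) (h : Abar -> D) : is_alg_hom h ->
  mat_rel e i j (fun a => h (io a)) (h xij) (h xji).
Proof.
case=> _ hM _; split; try split;
by rewrite -hM ?mu_XY ?mu_YX ?mu_EiX ?mu_XEj ?mu_EjY ?mu_YEi.
Qed.

Lemma fusion_hom_unique (D : algType k) (h1 h2 : Abar -> D) :
  is_alg_hom h1 -> is_alg_hom h2 -> (forall a, h1 (io a) = h2 (io a)) ->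
  h1 xij = h2 xij -> h1 xji = h2 xji -> forall x, h1 x = h2 x.
Proof.
move=> hom1 hom2 h_io h_X h_Y x; case: hA => _ _ univ.
have [h [_ _ _ _ uniq]] := univ D _ _ _ (hom_comp io_hom hom2) (hom_mat_rel hom2).
by rewrite (uniq h1 hom1 h_io h_X h_Y) (uniq h2 hom2 (fun _ => erefl) erefl erefl).
Qed.

(* Abar is generated, as an algebra, by io A, e_ij and e_ji: the universal
   property gives a section of the inclusion of the generated subalgebra. *)
Definition fusion_atom (x : Abar) := (exists a, x = io a) \/ x = xij \/ x = xji.

Lemma fusion_generated x : subalg_closure fusion_atom x.
Proof.
pose D := subalg fusion_atom.
pose g a : D := subalg_gen (or_introl (ex_intro _ a erefl) : fusion_atom (io a)).
pose X : D := subalg_gen (or_intror (or_introl erefl) : fusion_atom xij).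
pose Y : D := subalg_gen (or_intror (or_intror erefl) : fusion_atom xji).
have hom_g : is_alg_hom g.
  by split=> [c a b | a b |]; apply: val_inj; rewrite /= ?io_lin ?ioM ?io1.
have rel_g : mat_rel e i j g X Y.
  by split; try split; apply: val_inj;
     rewrite /= ?ioM ?mu_XY ?mu_YX ?mu_EiX ?mu_XEj ?mu_EjY ?mu_YEi.
case: hA => _ _ univ; have [h [hom_h h_io h_X h_Y _]] := univ D g X Y hom_g rel_g.
have val_h : forall y, subalg_val (h y) = y.
  apply: fusion_hom_unique (hom_comp hom_h (@subalg_val_hom _ _ _)) (@hom_id _ _) _ _ _.
  - by move=> a; rewrite h_io.
  - by rewrite h_X.
  - by rewrite h_Y.
by rewrite -(val_h x); apply/subalg_memP; case: (h x).
Qed.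

(* Hence the corner eps Abar eps is generated, as a (non-unital) algebra, by
   the generators: sandwiching a product x y between factors uses the
   decomposition 1 = eps eps + e_ji e_ij. *)
Lemma sandwich_generated x : subalg_closure fusion_atom x ->
  forall l r, lfactor l -> rfactor r -> nclosure generator (l * x * r).
Proof.
have gen_eps c : nclosure generator (eps * io c * eps).
  by apply: ncl_base; exists eps, eps, c; split=> //; left.
elim=> [y [[[a ->] | atom] | ->] | c y z _ IHy _ IHz | y z _ IHy _ IHz] l r hl hr.
- by apply: ncl_base; exists l, r, a.
- have [-> | ->] : l * y * r = eps * io 0 * eps \/ l * y * r = eps * io (e i) * eps.
    by case: atom hl hr => -> [] -> [] ->; fusion_norm; first [by left | by right].
  + exact: (gen_eps 0).
  + exact: (gen_eps (e i)).
- by rewrite mulr1 -[l]mulr1 -io1; apply: ncl_base; exists l, r, 1.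
- by rewrite mulrDr mulrDl -scalerAr -scalerAl; apply: ncl_lin; [exact: IHy | exact: IHz].
- rewrite (mul_split l y z r eps_unit_decomp).
  rewrite -[_ * (eps * z * r)]scale1r; apply: ncl_lin; apply: ncl_mul.
  + by apply: IHy => //; left.
  + by apply: IHz => //; left.
  + by apply: IHy => //; right.
  + by apply: IHz => //; right.
Qed.

Lemma corner_generated x : in_corner eps x -> nclosure generator x.
Proof. by move=> h; rewrite -h; apply: (sandwich_generated (fusion_generated x)); left. Qed.

Lemma generated_corner x : nclosure generator x -> in_corner eps x.
Proof.
elim=> [_ [l [r [a [hl hr ->]]]] | c y z _ hy _ hz | y z _ hy _ hz].
- exact: corner_lr (lfactor_lcorner hl) (rfactor_rcorner hr).
- exact: corner_lin.
- exact: corner_mul eps_idem hy hz.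
Qed.

(* The exchange element P = io e^ + e_ij + e_ji is an involution; conjugation
   by P sends 1 - io e_i (the corner unit of the opposite fusion) to
   eps = 1 - io e_j, and left/right multiplication by P sends the factors of
   the opposite fusion into the B-spans of the factors of this one. *)
Definition exch : Abar := io ehat + xij + xji.

Definition eps_op : Abar := 1 - io (e i).

Lemma eps_op_split : eps_op = io ehat + io (e j).
Proof. by rewrite /eps_op io_unit_split addrAC addrK. Qed.

Lemma exch_invol : exch * exch = 1.
Proof. by rewrite /exch; fusion_norm; rewrite io_unit_split addrAC. Qed.

Lemma exch_conj : exch * eps_op * exch = eps.
Proof. by rewrite /exch eps_op_split; fusion_norm. Qed.

Lemma exch_fmap_l : exch * (eps_op + xji) = eps + xij.
Proof. by rewrite /exch eps_op_split; fusion_norm; rewrite (addrC xij) addrA. Qed.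

Lemma exch_fmap_r : (eps_op + xij) * exch = eps + xji.
Proof. by rewrite /exch eps_op_split; fusion_norm; rewrite addrAC. Qed.

Lemma exch_lspan_eps : lspan (exch * eps_op).
Proof.
exists ehat, 1; split; [exact: inBase_ehat | exact: inBase_1 |].
by rewrite io1 mulr1 /exch eps_op_split; fusion_norm.
Qed.

Lemma exch_lspan_xji : lspan (exch * xji).
Proof.
exists (e i), 0; split; [exact: inBase_e | exact: inBase_0 |].
by rewrite /exch; fusion_norm.
Qed.

Lemma exch_rspan_eps : rspan (eps_op * exch).
Proof.
exists ehat, 1; split; [exact: inBase_ehat | exact: inBase_1 |].
by rewrite io1 mul1r /exch eps_op_split; fusion_norm.
Qed.

Lemma exch_rspan_xij : rspan (xij * exch).
Proof.
exists (e i), 0; split; [exact: inBase_e | exact: inBase_0 |].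
by rewrite /exch; fusion_norm.
Qed.

Section InducedBracket.
Variable br : A -> A -> tensor A.
Hypothesis hbr : is_double_bracket (fun _ => True) B br.
Variable brf : Abar -> Abar -> tensor Abar.
Hypothesis hbrf : induced_bracket e j br io xij xji brf.

Definition gen_formula l r l' r' := forall a b,
  teq (brf (l * io a * r) (l' * io b * r'))
      [seq (l' * io p.1 * r, l * io p.2 * r') | p <- br a b].

Lemma lin_sandwich l r : lin (fun x => l * io x * r).
Proof. exact: lin_comp (lin_lr l r) io_lin. Qed.

Lemma factor_idempotents l r : lfactor l -> rfactor r -> exists p q,
  [/\ B p, B q, l * io p = l, io q * r = r &
      forall a, gen_form e j xij xji eps l r (p * a * q)].
Proof.
have idem_cj : (1 - e j) * (1 - e j) = 1 - e j.
  by rewrite mulrBl mul1r mulrBr mulr1 e_idem subrr subr0.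
have idem_j : e j * e j = e j := e_idem j.
have B_cj : B (1 - e j) by apply: inBase_sub; [exact: inBase_1 | exact: inBase_e].
have io_cj : io (1 - e j) = eps by rewrite (linB io_lin) io1.
have sandw (p q a : A) : p * p = p -> q * q = q -> p * (p * a * q) * q = p * a * q.
  by move=> hp hq; rewrite !mulrA hp -mulrA hq.
case=> -> [] ->.
- exists (1 - e j), (1 - e j); rewrite io_cj eps_idem; split=> // a.
  by constructor 1; split=> //; exact: sandw.
- exists (1 - e j), (e j); rewrite io_cj eps_idem mu_EjY; split=> //; first exact: inBase_e.
  by move=> a; constructor 3; split=> //; exact: sandw.
- exists (e j), (1 - e j); rewrite io_cj eps_idem mu_XEj; split=> //; first exact: inBase_e.
  by move=> a; constructor 2; split=> //; exact: sandw.
- exists (e j), (e j); rewrite mu_XEj mu_EjY; split=> //; try exact: inBase_e.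
  by move=> a; constructor 4; split=> //; exact: sandw.
Qed.

Lemma sandwich_base l r p q x : l * io p = l -> io q * r = r ->
  l * io (p * x * q) * r = l * io x * r.
Proof. by move=> hl hr; rewrite !ioM !mulrA hl -mulrA hr. Qed.

Lemma gen_formula_factors l r l' r' :
  lfactor l -> rfactor r -> lfactor l' -> rfactor r' -> gen_formula l r l' r'.
Proof.
move=> hl hr hl' hr' a b.
have [p [q [Bp Bq hp hq gen_a]]] := factor_idempotents hl hr.
have [p' [q' [Bp' Bq' hp' hq' gen_b]]] := factor_idempotents hl' hr'.
rewrite -(sandwich_base a hp hq) -(sandwich_base b hp' hq').
case: hbrf => _ formula; apply: teq_trans (formula _ _ _ _ _ _ (gen_a a) (gen_b b)) _.
apply: teq_trans (teq_map (lin_sandwich l' r) (lin_sandwich l r')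
  (br_base_bimodule hbr a b Bp Bq Bp' Bq')) _.
by rewrite -map_comp; apply: eq_teq; apply: eq_map => u /=; rewrite !sandwich_base.
Qed.

(* Skew-symmetry of both brackets makes the formula symmetric. *)
Lemma gen_formula_sym l r l' r' : lcorner l -> rcorner r -> lcorner l' -> rcorner r' ->
  gen_formula l r l' r' -> gen_formula l' r' l r.
Proof.
move=> hl hr hl' hr' H a b; case: hbrf => [[_ _ skew _ _] _].
apply: teq_trans (skew _ _ (corner_lr _ hl' hr') (corner_lr _ hl hr)) _; rewrite toppswap.
apply: teq_trans (teq_map_swap (@lin_opp _ _) (@lin_id _ _) (H b a)) _.
apply: teq_sym; case: hbr => _ _ skewA _ _.
apply: teq_trans (teq_map (lin_sandwich l r') (lin_sandwich l' r) (skewA a b Logic.I Logic.I)) _.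
rewrite toppswap -!map_comp; apply: eq_teq; apply: eq_map => u /=.
by rewrite (linN io_lin) mulrN mulNr.
Qed.

Lemma gen_formula_linl c l1 l2 r l' r' :
  lcorner l1 -> lcorner l2 -> rcorner r -> lcorner l' -> rcorner r' ->
  gen_formula l1 r l' r' -> gen_formula l2 r l' r' -> gen_formula (c *: l1 + l2) r l' r'.
Proof.
move=> h1 h2 hr hl' hr' H1 H2 a b; case: hbrf => [[linl _ _ _ _] _].
have -> : (c *: l1 + l2) * io a * r = c *: (l1 * io a * r) + l2 * io a * r
  by rewrite !mulrDl -!scalerAl.
apply: teq_trans (linl _ _ _ _ (corner_lr _ h1 hr) (corner_lr _ h2 hr) (corner_lr _ hl' hr')) _.
apply: teq_trans (teq_cat (teq_tscale c (H1 a b)) (H2 a b)) _.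
apply: teq_sym; under eq_map => u do rewrite !mulrDl -!scalerAl.
by apply: teq_trans (teq_addr _ _ _ _) _; apply: teq_cat (teq_scaler _ _ _ _) _.
Qed.

Lemma gen_formula_linr c l r1 r2 l' r' :
  lcorner l -> rcorner r1 -> rcorner r2 -> lcorner l' -> rcorner r' ->
  gen_formula l r1 l' r' -> gen_formula l r2 l' r' -> gen_formula l (c *: r1 + r2) l' r'.
Proof.
move=> hl h1 h2 hl' hr' H1 H2 a b; case: hbrf => [[linl _ _ _ _] _].
have -> : l * io a * (c *: r1 + r2) = c *: (l * io a * r1) + l * io a * r2
  by rewrite mulrDr -scalerAr.
apply: teq_trans (linl _ _ _ _ (corner_lr _ hl h1) (corner_lr _ hl h2) (corner_lr _ hl' hr')) _.
apply: teq_trans (teq_cat (teq_tscale c (H1 a b)) (H2 a b)) _.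
apply: teq_sym; under eq_map => u do rewrite mulrDr -scalerAr.
apply: teq_trans (teq_addl _ _ _ _) _; apply: teq_cat => //.
by rewrite /tscale -map_comp.
Qed.

Lemma gen_formula_mull_base d l r l' r' : B d ->
  gen_formula l r l' r' -> gen_formula (l * io d) r l' r'.
Proof.
move=> Bd H a b.
have -> : l * io d * io a * r = l * io (d * a * 1) * r by rewrite mulr1 ioM mulrA.
apply: teq_trans (H _ b) _.
apply: teq_trans (teq_map (lin_sandwich l' r) (lin_sandwich l r')
  (br_base_left hbr a b Bd (inBase_1 he))) _.
by rewrite -map_comp; apply: eq_teq; apply: eq_map => u /=; rewrite mulr1 ioM mulrA.
Qed.

Lemma gen_formula_mulr_base d l r l' r' : B d ->
  gen_formula l r l' r' -> gen_formula l (io d * r) l' r'.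
Proof.
move=> Bd H a b.
have -> : l * io a * (io d * r) = l * io (1 * a * d) * r by rewrite mul1r ioM !mulrA.
apply: teq_trans (H _ b) _.
apply: teq_trans (teq_map (lin_sandwich l' r) (lin_sandwich l r')
  (br_base_left hbr a b (inBase_1 he) Bd)) _.
by rewrite -map_comp; apply: eq_teq; apply: eq_map => u /=; rewrite mul1r ioM !mulrA.
Qed.

Lemma gen_formula_span1 l' r' : lcorner l' -> rcorner r' ->
  (forall l r, lfactor l -> rfactor r -> gen_formula l r l' r') ->
  forall l r, lspan l -> rspan r -> gen_formula l r l' r'.
Proof.
move=> hl' hr' H l r [b [g [Bb Bg ->]]] [b' [g' [Bb' Bg' ->]]].
have lc (l0 : Abar) d : lfactor l0 -> lcorner (l0 * io d).
  by move=> /lfactor_lcorner h; rewrite /lcorner mulrA h.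
have rc (r0 : Abar) d : rfactor r0 -> rcorner (io d * r0).
  by move=> /rfactor_rcorner h; rewrite /rcorner -mulrA h.
have Hr l0 d : lfactor l0 -> B d ->
    gen_formula (l0 * io d) (io b' * eps + io g' * xji) l' r'.
  move=> hl0 Bd; rewrite -[io b' * eps]scale1r.
  apply: gen_formula_linr; rewrite ?scale1r => //.
  + exact: lc.
  + by apply: rc; left.
  + by apply: rc; right.
  + apply: gen_formula_mull_base => //; apply: gen_formula_mulr_base => //.
    by apply: H => //; left.
  + apply: gen_formula_mull_base => //; apply: gen_formula_mulr_base => //.
    by apply: H => //; right.
rewrite -[eps * io b]scale1r; apply: gen_formula_linl; rewrite ?scale1r.
- by apply: lc; left.
- by apply: lc; right.
- by apply: rspan_rcorner; exists b', g'.
- by [].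
- by [].
- by apply: Hr => //; left.
- by apply: Hr => //; right.
Qed.

Lemma gen_formula_span l r l' r' :
  lspan l -> rspan r -> lspan l' -> rspan r' -> gen_formula l r l' r'.
Proof.
move=> hl hr hl' hr'.
have span_factor l0 r0 : lfactor l0 -> rfactor r0 ->
    forall l r, lspan l -> rspan r -> gen_formula l r l0 r0.
  move=> h0 h0'; apply: gen_formula_span1; [exact: lfactor_lcorner | exact: rfactor_rcorner |].
  by move=> l1 r1 h1 h1'; apply: gen_formula_factors.
apply: gen_formula_sym;
  [exact: lspan_lcorner | exact: rspan_rcorner | exact: lspan_lcorner | exact: rspan_rcorner |].
apply: gen_formula_span1 => //; [exact: lspan_lcorner | exact: rspan_rcorner |].
move=> l0 r0 h0 h0'; apply: gen_formula_sym; [exact: lspan_lcorner | exact: rspan_rcorner |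
  exact: lfactor_lcorner | exact: rfactor_rcorner |].
exact: span_factor.
Qed.

End InducedBracket.

End FusionAlgebra.

Section BracketTransfer.
Variables (k : fieldType) (T1 T2 : algType k).
Variables (D1 B1 : T1 -> Prop) (D2 B2 : T2 -> Prop).
Variables (br1 : T1 -> T1 -> tensor T1) (br2 : T2 -> T2 -> tensor T2).
Hypotheses (hbr1 : is_double_bracket D1 B1 br1) (hbr2 : is_double_bracket D2 B2 br2).
Variable phi : T1 -> T2.
Hypotheses (phi_lin : lin phi) (phi_mul : forall x y, phi (x * y) = phi x * phi y).
Hypothesis phi_dom : forall x, D1 x -> D2 (phi x).

Definition intertwines x y :=
  teq (br2 (phi x) (phi y)) [seq (phi p.1, phi p.2) | p <- br1 x y].

Lemma intertwines_sym x y : D1 x -> D1 y -> intertwines x y -> intertwines y x.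
Proof.
move=> hx hy H; case: hbr1 hbr2 => [_ _ skew1 _ _] [_ _ skew2 _ _].
apply: teq_trans (skew2 _ _ (phi_dom hy) (phi_dom hx)) _; rewrite toppswap.
apply: teq_trans (teq_map_swap (@lin_opp _ _) (@lin_id _ _) H) _.
apply: teq_sym; apply: teq_trans (teq_map phi_lin phi_lin (skew1 y x hy hx)) _.
by rewrite toppswap -!map_comp; apply: eq_teq; apply: eq_map => p /=; rewrite (linN phi_lin).
Qed.

(* Both brackets are linear derivations in their second argument, so the set
   of y at which phi intertwines them (for fixed x) is closed under linear
   combinations and products. *)
Variable S : T1 -> Prop.
Hypothesis closure_dom : forall x, nclosure S x -> D1 x.

Lemma intertwines_closure_r x : D1 x -> (forall y, S y -> intertwines x y) ->
  forall y, nclosure S y -> intertwines x y.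
Proof.
move=> hx hS y; case: hbr1 hbr2 => [_ lin1 _ leib1 _] [_ lin2 _ leib2 _].
elim=> [z /hS // | c y1 y2 g1 IH1 g2 IH2 | y1 y2 g1 IH1 g2 IH2].
- have d1 := closure_dom g1; have d2 := closure_dom g2.
  rewrite /intertwines phi_lin.
  apply: teq_trans (lin2 c _ _ _ (phi_dom hx) (phi_dom d1) (phi_dom d2)) _.
  apply: teq_trans (teq_cat (teq_tscale c IH1) IH2) _.
  apply: teq_sym; apply: teq_trans (teq_map phi_lin phi_lin (lin1 c x y1 y2 hx d1 d2)) _.
  rewrite map_cat /tscale -!map_comp; apply: eq_teq; congr (_ ++ _).
  by apply: eq_map => p /=; rewrite (linZ phi_lin).
- have d1 := closure_dom g1; have d2 := closure_dom g2.
  rewrite /intertwines phi_mul.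
  apply: teq_trans (leib2 _ _ _ (phi_dom hx) (phi_dom d1) (phi_dom d2)) _.
  apply: teq_trans (teq_cat (teq_map (@lin_id _ _) (lin_mulr (phi y2)) IH1)
                            (teq_map (lin_mull (phi y1)) (@lin_id _ _) IH2)) _.
  apply: teq_sym; apply: teq_trans (teq_map phi_lin phi_lin (leib1 x y1 y2 hx d1 d2)) _.
  rewrite map_cat /tmulr /tmull -!map_comp; apply: eq_teq.
  by congr (_ ++ _); apply: eq_map => p /=; rewrite phi_mul.
Qed.

Lemma intertwines_closure : (forall x y, S x -> S y -> intertwines x y) ->
  forall x y, nclosure S x -> nclosure S y -> intertwines x y.
Proof.
move=> hS x y gx; apply: intertwines_closure_r; first exact: closure_dom.
move=> z hz; have dz := closure_dom (ncl_base hz).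
apply: intertwines_sym => //; first exact: closure_dom.
by apply: intertwines_closure_r => // w hw; apply: hS.
Qed.

End BracketTransfer.

Lemma mat_rel_swap (k : fieldType) (A D : algType k) (I : finType) (e : I -> A) i j
    (g : A -> D) y z :
  mat_rel e i j g y z -> mat_rel e j i g z y.
Proof. by case=> h1 h2 [h3 h4] [h5 h6]; split. Qed.

Lemma fmapE (k : fieldType) (A Abar : algType k) (io : A -> Abar) (x y ep : Abar) a :
  fmap io x y ep a = (ep + x) * io a * (ep + y).
Proof.
rewrite /fmap mulrDl !mulrDr !mulrDl -!addrA; congr (_ + _).
by rewrite addrC -!addrA; congr (_ + _); rewrite addrC.
Qed.

Section Swap.
Variables (k : fieldType) (A : algType k) (I : finType) (e : I -> A).
Hypothesis he : base_family e.
Variables (i j : I).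
Hypothesis hij : i != j.
Variables (Abar1 : algType k) (io1 : A -> Abar1) (x1 y1 : Abar1).
Hypothesis hA1 : is_fusion_free_product e i j io1 x1 y1.
Variables (Abar2 : algType k) (io2 : A -> Abar2) (x2 y2 : Abar2).
Hypothesis hA2 : is_fusion_free_product e j i io2 x2 y2.

Let hji : j != i. Proof. by rewrite eq_sym. Qed.

(* The two free products are the same object with the matrix units
   e_ij and e_ji exchanged: the universal properties give inverse algebra
   isomorphisms Abar1 <-> Abar2 fixing A and exchanging the matrix units. *)
Lemma fusion_swap : exists F G,
  [/\ is_alg_hom F, (forall a, F (io1 a) = io2 a), F x1 = y2, F y1 = x2 &
      cancel F G /\ cancel G F].
Proof.
case: (hA1) => hom1 rel1 univ1; case: (hA2) => hom2 rel2 univ2.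
have [F [homF F_io F_x F_y _]] := univ1 _ _ _ _ hom2 (mat_rel_swap rel2).
have [G [homG G_io G_x G_y _]] := univ2 _ _ _ _ hom1 (mat_rel_swap rel1).
exists F, G; split=> //; split.
- apply: (fusion_hom_unique hA1 (hom_comp homF homG) (@hom_id _ _)).
  + by move=> a; rewrite F_io G_io.
  + by rewrite F_x G_y.
  + by rewrite F_y G_x.
- apply: (fusion_hom_unique hA2 (hom_comp homG homF) (@hom_id _ _)).
  + by move=> a; rewrite G_io F_io.
  + by rewrite G_x F_y.
  + by rewrite G_y F_x.
Qed.

(* F sends eps1 = 1 - io1 e_j to 1 - io2 e_j, which is
   not the corner unit eps2 = 1 - io2 e_i of A_2; composing with conjugation
   by the exchange element P of Abar2 repairs this. *)
Variables (F : Abar1 -> Abar2) (G : Abar2 -> Abar1).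
Hypotheses (homF : is_alg_hom F) (F_io : forall a, F (io1 a) = io2 a).
Hypotheses (F_x : F x1 = y2) (F_y : F y1 = x2) (FK : cancel F G) (GK : cancel G F).

Local Notation P := (exch e j i io2 x2 y2).
Local Notation eps1 := (feps e j io1).
Local Notation eps2 := (feps e i io2).

Definition swap_map (x : Abar1) : Abar2 := P * F x * P.

Lemma F_mul x y : F (x * y) = F x * F y. Proof. by case: homF. Qed.
Lemma F_lin : lin F. Proof. by case: homF. Qed.

Lemma F_eps : F eps1 = eps_op e j io2.
Proof. by case: homF => _ _ F1; rewrite /feps (linB F_lin) F1 F_io. Qed.

Lemma swap_map_mul x y : swap_map (x * y) = swap_map x * swap_map y.
Proof.
by rewrite /swap_map F_mul !mulrA -(mulrA _ P P) (exch_invol he hji hA2) mulr1.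
Qed.

Lemma swap_map_lin : lin swap_map.
Proof. exact: lin_comp (lin_lr P P) F_lin. Qed.

Lemma swap_map_unit : swap_map eps1 = eps2.
Proof. by rewrite /swap_map F_eps (exch_conj he hji hA2). Qed.

Lemma swap_map_corner x : in_corner eps1 x -> in_corner eps2 (swap_map x).
Proof. by rewrite /in_corner -swap_map_unit -!swap_map_mul => ->. Qed.

Lemma swap_map_inj x y : swap_map x = swap_map y -> x = y.
Proof.
have PP := exch_invol he hji hA2.
move=> /(congr1 (fun z => P * z * P)).
rewrite /swap_map !mulrA !PP !mul1r -!mulrA !PP !mulr1.
by move=> /(congr1 G); rewrite !FK.
Qed.

Lemma swap_map_onto z : in_corner eps2 z -> exists2 x, in_corner eps1 x & swap_map x = z.
Proof.
have PP := exch_invol he hji hA2.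
have sz : swap_map (G (P * z * P)) = z.
  by rewrite /swap_map GK !mulrA PP mul1r -mulrA PP mulr1.
move=> hz; exists (G (P * z * P)) => //.
by apply: swap_map_inj; rewrite !swap_map_mul swap_map_unit sz.
Qed.

Lemma swap_map_fmap a : swap_map (fmap io1 x1 y1 eps1 a) = fmap io2 x2 y2 eps2 a.
Proof.
rewrite /swap_map !fmapE !F_mul F_io (linD F_lin eps1) (linD F_lin eps1) F_eps F_x F_y.
by rewrite !mulrA (exch_fmap_l he hji hA2) -mulrA (exch_fmap_r he hji hA2).
Qed.

Lemma swap_map_sandwich l r a : swap_map (l * io1 a * r) = (P * F l) * io2 a * (F r * P).
Proof. by rewrite /swap_map !F_mul F_io !mulrA. Qed.

Lemma swap_lspan l : lfactor e j io1 x1 l -> lspan e i io2 x2 (P * F l).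
Proof.
case=> ->; first by rewrite F_eps; exact: (exch_lspan_eps he hji hA2).
by rewrite F_x; exact: (exch_lspan_xji he hji hA2).
Qed.

Lemma swap_rspan r : rfactor e j io1 y1 r -> rspan e i io2 y2 (F r * P).
Proof.
case=> ->; first by rewrite F_eps; exact: (exch_rspan_eps he hji hA2).
by rewrite F_y; exact: (exch_rspan_xij he hji hA2).
Qed.

(* swap_map intertwines the induced double brackets: on generators this is
   the B-bilinear extension of the defining formula, and the corners are
   generated by the generators. *)
Variable br : A -> A -> tensor A.
Hypothesis hbr : is_double_bracket (fun _ => True) (inBase e predT) br.
Variables (br1 : Abar1 -> Abar1 -> tensor Abar1) (br2 : Abar2 -> Abar2 -> tensor Abar2).
Hypothesis hbr1 : induced_bracket e j br io1 x1 y1 br1.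
Hypothesis hbr2 : induced_bracket e i br io2 x2 y2 br2.

Lemma swap_map_bracket x y : in_corner eps1 x -> in_corner eps1 y ->
  teq (br2 (swap_map x) (swap_map y)) [seq (swap_map p.1, swap_map p.2) | p <- br1 x y].
Proof.
move=> hx hy; case: (hbr1) (hbr2) => [dbr1 _] [dbr2 _]; rewrite -/(intertwines _ _ _ x y).
apply: (intertwines_closure dbr1 dbr2 swap_map_lin swap_map_mul swap_map_corner
  (generated_corner he hij hA1)); try exact: (corner_generated he hij hA1).
move=> _ _ [l [r [a [hl hr ->]]]] [l' [r' [b [hl' hr' ->]]]].
rewrite /intertwines !swap_map_sandwich.
apply: teq_trans (gen_formula_span he hji hA2 hbr hbr2 (swap_lspan hl) (swap_rspan hr)
  (swap_lspan hl') (swap_rspan hr') a b) _.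
apply: teq_sym; apply: teq_trans (teq_map swap_map_lin swap_map_lin
  (gen_formula_factors he hij hA1 hbr hbr1 hl hr hl' hr' a b)) _.
by rewrite -map_comp; apply: eq_teq; apply: eq_map => p /=; rewrite !swap_map_sandwich.
Qed.

End Swap.
Theorem mainTheorem6
  (k : fieldType) (hk : [pchar k] =i pred0)
  (A : algType k) (hfg : fin_gen A)
  (I : finType) (e : I -> A) (he : base_family e)
  (br : A -> A -> tensor A)
  (hbr : is_double_bracket (fun _ => True) (inBase e predT) br)
  (i1 i2 : I) (hi : i1 != i2)
  (* A_1 = A^f_{e_2 -> e_1} = eps1 Abar1 eps1, eps1 = 1 - e_2 *)
  (Abar1 : algType k) (iota1 : A -> Abar1) (x12 x21 : Abar1)
  (hA1 : is_fusion_free_product e i1 i2 iota1 x12 x21)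
  (br1 : Abar1 -> Abar1 -> tensor Abar1)
  (hbr1 : induced_bracket e i2 br iota1 x12 x21 br1)
  (* A_2 = A^f_{e_1 -> e_2} = eps2 Abar2 eps2, eps2 = 1 - e_1 *)
  (Abar2 : algType k) (iota2 : A -> Abar2) (y21 y12 : Abar2)
  (hA2 : is_fusion_free_product e i2 i1 iota2 y21 y12)
  (br2 : Abar2 -> Abar2 -> tensor Abar2)
  (hbr2 : induced_bracket e i1 br iota2 y21 y12 br2) :
  let eps1 := feps e i2 iota1 in
  let eps2 := feps e i1 iota2 in
  exists phi : Abar1 -> Abar2,
    [/\ (* phi is a k-algebra isomorphism A_1 -> A_2 *)
        (forall x, in_corner eps1 x -> in_corner eps2 (phi x)) /\
        (forall c x y, in_corner eps1 x -> in_corner eps1 y ->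
           phi (c *: x + y) = c *: phi x + phi y),
        (forall x y, in_corner eps1 x -> in_corner eps1 y ->
           phi (x * y) = phi x * phi y) /\ phi eps1 = eps2,
        (forall x y, in_corner eps1 x -> in_corner eps1 y -> phi x = phi y -> x = y) /\
        (forall z, in_corner eps2 z -> exists2 x, in_corner eps1 x & phi x = z),
        (* phi o pi_1 = pi_2 *)
        (forall a, phi (fmap iota1 x12 x21 eps1 a) = fmap iota2 y21 y12 eps2 a) &
        (* phi is an isomorphism of double brackets *)
        (forall x y, in_corner eps1 x -> in_corner eps1 y ->
           teq (br2 (phi x) (phi y)) [seq (phi p.1, phi p.2) | p <- br1 x y])].
Proof.
move=> eps1 eps2.
have [F [G [homF F_io F_x F_y [FK GK]]]] := fusion_swap hA1 hA2.
exists (swap_map e i1 i2 iota2 y21 y12 F); split.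
- split; first exact: swap_map_corner.
  by move=> c x y _ _; apply: swap_map_lin.
- split; last exact: swap_map_unit.
  by move=> x y _ _; apply: swap_map_mul.
- split; last exact: swap_map_onto.
  by move=> x y _ _; apply: swap_map_inj.
- exact: swap_map_fmap.
- exact: (swap_map_bracket he hi hA1 hA2 homF F_io F_x F_y hbr hbr1 hbr2).
Qed.
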